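(* Fix an initial exchange matrix $B^0$ and initial coefficients $p_1,\dots,p_n\in\mathbb P$. For all $v,v'\in\mathbb T^n$ and $i,j\in[1,n]$, one has $Y_{i;v}=Y_{j;v'}$ if and only if $\widetilde Y_{i;v}=\widetilde Y_{j;v'}$. That is, the $Y$-pattern $v\mapsto((Y_{1;v},\dots,Y_{n;v}),B_v)$ and the $Y$-pattern with coefficients $v\mapsto((\widetilde Y_{1;v},\dots,\widetilde Y_{n;v}),\mathbf p_v,B_v)$ have the same periodicities.
   Context: A semifield $(\mathbb P,\oplus,\cdot,1)$ satisfies the field axioms except that $\oplus$ need not have a neutral element or inverses; $p^+=p/(p\oplus1)$, $p^-=1/(p\oplus1)$, $p^{[\![x]\!]}=p^-,1,p^+$ according as $x<0,=0,>0$. $\mathbb Q_{\mathrm{sf}}(S)$ is the universal semifield of subtraction-free rational functions in $S$ (any map from $S$ to a semifield extends uniquely to a semifield morphism). $\mathbb Q\mathbb P$ is the fraction field of the group ring $\mathbb Z\mathbb P$; $\mathbb Q\mathbb P_{\mathrm{sf}}(u_1,\dots,u_n)$ is the semifield of ratios of nonzero polynomials in $u_i$ with coefficients nonnegative integer combinations of elements of $\mathbb P$. Matrix mutation: $b'_{ij}=-b_{ij}$ if $i=k$ or $j=k$, else $b_{ij}+\operatorname{sgn}(b_{ik})[b_{ik}b_{kj}]_+$. $Y$-seed mutation: $y'_k=y_k^{-1}$, $y'_j=y_j(1\oplus y_k^{-\operatorname{sgn}(b_{kj})})^{-b_{kj}}$. $Y$-seed with coefficients $(\mathbf y,\mathbf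 p,B)$ ($\mathbf p$ in $\mathbb P$, $\mathbf y$ in $\mathbb Q\mathbb P_{\mathrm{sf}}(u)$) mutates by $Y$-seed mutation of $(\mathbf p,B)$, $y'_k=y_k^{-1}$, $y'_j=y_j\big(p_k^{[\![b_{kj}]\!]}+p_k^{[\![-b_{kj}]\!]}y_k^{-\operatorname{sgn}(b_{kj})}\big)^{-b_{kj}}$ for $j\ne k$. Patterns are assignments of seeds to vertices of the $n$-regular edge-labeled tree $\mathbb T^n$ with initial vertex $v_0$, compatible with mutation along edges. $Y_{j;v}\in\mathbb Q_{\mathrm{sf}}(y_1,\dots,y_n)$: components of the $Y$-pattern with initial seed $((y_1,\dots,y_n),B^0)$ at $v_0$. $\widetilde Y_{j;v}\in\mathbb Q\mathbb P_{\mathrm{sf}}(y_1,\dots,y_n)$, $\mathbf p_v$: components of the $Y$-pattern with coefficients with initial seed $((y_1,\dots,y_n),(p_1,\dots,p_n),B^0)$. *)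

From HB Require Import structures.
From mathcomp Require Import all_boot all_order all_algebra.
From Stdlib Require Import Permutation.
Set Implicit Arguments. Unset Strict Implicit. Unset Printing Implicit Defensive.
Import Order.TTheory GRing.Theory Num.Theory.
Local Open Scope ring_scope.

Record semifield := Semifield {
  sf_car :> Type;
  sf_add : sf_car -> sf_car -> sf_car;
  sf_mul : sf_car -> sf_car -> sf_car;
  sf_one : sf_car;
  sf_inv : sf_car -> sf_car;
  sf_mulA : forall x y z, sf_mul x (sf_mul y z) = sf_mul (sf_mul x y) z;
  sf_mulC : forall x y, sf_mul x y = sf_mul y x;
  sf_mul1 : forall x, sf_mul x sf_one = x;
  sf_mulV : forall x, sf_mul x (sf_inv x) = sf_one;
  sf_addA : forall x y z, sf_add x (sf_add y z) = sf_add (sf_add x y) z;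
  sf_addC : forall x y, sf_add x y = sf_add y x;
  sf_mulDl : forall x y z, sf_mul (sf_add x y) z = sf_add (sf_mul x z) (sf_mul y z)
}.

(* Bare semifield operations (used to run mutations in concrete models). *)
Record sfops := SFOps {
  o_car :> Type;
  o_add : o_car -> o_car -> o_car;
  o_mul : o_car -> o_car -> o_car;
  o_one : o_car;
  o_inv : o_car -> o_car
}.

Definition ops_of (P : semifield) : sfops :=
  @SFOps P (@sf_add P) (@sf_mul P) (@sf_one P) (@sf_inv P).

Definition o_expz (S : sfops) (x : S) (z : int) : S :=
  match z with
  | Posz m => iter m (o_mul x) (o_one S)
  | Negz m => o_inv (iter m.+1 (o_mul x) (o_one S))
  end.

Definition o_plus (S : sfops) (p : S) : S := o_mul p (o_inv (o_add p (o_one S))).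
Definition o_minus (S : sfops) (p : S) : S := o_inv (o_add p (o_one S)).
Definition o_brk (S : sfops) (p : S) (x : int) : S :=
  if x < 0 then o_minus p else if x == 0 then o_one S else o_plus p.

Definition skew_symmetrizable n (B : 'M[int]_n) : Prop :=
  exists d : 'I_n -> int, (forall i, 0 < d i) /\
    (forall i j, d i * B i j = - (d j * B j i)).

Definition mut_mx n (k : 'I_n) (B : 'M[int]_n) : 'M[int]_n :=
  \matrix_(i, j) if (i == k) || (j == k) then - B i j
                 else B i j + sgz (B i k) * Num.max (B i k * B k j) 0.

Definition mut_y (S : sfops) n (k : 'I_n) (B : 'M[int]_n) (y : 'I_n -> S)
  : 'I_n -> S :=
  fun j => if j == k then o_inv (y k)
           else o_mul (y j)
                  (o_expz (o_add (o_one S) (o_expz (y k) (- sgz (B k j))))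
                          (- B k j)).

(* The n-regular tree T^n: vertices are reduced words in 'I_n (no two
   consecutive letters equal); the word [k1;...;km] is the vertex reached
   from v0 by the path with edge labels k1, ..., km. *)
Definition reduced n (w : seq 'I_n) : bool := sorted (fun a b : 'I_n => a != b) w.

(* Q_sf(y_1,...,y_n): the universal (free) semifield on y_1..y_n, realised
   as terms modulo the congruence generated by the semifield axioms. *)
Inductive sfterm (n : nat) : Type :=
| TVar of 'I_n
| TOne
| TAdd of sfterm n & sfterm n
| TMul of sfterm n & sfterm n
| TInv of sfterm n.

Arguments TOne {n}.

Inductive sfeq (n : nat) : sfterm n -> sfterm n -> Prop :=
| sfeq_refl t : sfeq t t
| sfeq_sym t u : sfeq t u -> sfeq u t
| sfeq_trans t u v : sfeq t u -> sfeq u v -> sfeq t v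
| sfeq_add t t' u u' : sfeq t t' -> sfeq u u' -> sfeq (TAdd t u) (TAdd t' u')
| sfeq_mul t t' u u' : sfeq t t' -> sfeq u u' -> sfeq (TMul t u) (TMul t' u')
| sfeq_inv t t' : sfeq t t' -> sfeq (TInv t) (TInv t')
| sfeq_mulA x y z : sfeq (TMul x (TMul y z)) (TMul (TMul x y) z)
| sfeq_mulC x y : sfeq (TMul x y) (TMul y x)
| sfeq_mul1 x : sfeq (TMul x TOne) x
| sfeq_mulV x : sfeq (TMul x (TInv x)) TOne
| sfeq_addA x y z : sfeq (TAdd x (TAdd y z)) (TAdd (TAdd x y) z)
| sfeq_addC x y : sfeq (TAdd x y) (TAdd y x)
| sfeq_mulDl x y z : sfeq (TMul (TAdd x y) z) (TAdd (TMul x z) (TMul y z)).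

Definition Qsf_ops (n : nat) : sfops :=
  @SFOps (sfterm n) (@TAdd n) (@TMul n) TOne (@TInv n).

Definition Ypattern n (B0 : 'M[int]_n) (w : seq 'I_n)
  : ('I_n -> Qsf_ops n) * 'M[int]_n :=
  foldl (fun s k => (mut_y k s.2 s.1, mut_mx k s.2))
        ((fun i => TVar i : Qsf_ops n), B0) w.

Definition Y n (B0 : 'M[int]_n) (w : seq 'I_n) (i : 'I_n) : sfterm n :=
  (Ypattern B0 w).1 i.

(* QP_sf(u_1..u_n): ratios f/g of nonzero polynomials with coefficients in
   N P (nonnegative integer combinations of elements of P), with equality
   taken in the field QP(u) = Frac(ZP)(u), i.e. f g' = f' g in ZP[u].
   Such a polynomial is a finite multiset of terms p * u^a (p in P, a in N^n),
   represented by a list; equality in ZP[u] = Z[P x N^n] of two such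
   N-combinations is equality of multisets (Permutation). *)
Section QPsf.
Variables (P : semifield) (n : nat).

Definition mono := {ffun 'I_n -> nat}.
Definition qpoly := seq (P * mono)%type.

Definition mono_mul (a b : mono) : mono := [ffun i => (a i + b i)%N].
Definition mono1 : mono := [ffun => 0%N].
Definition mono_var (i : 'I_n) : mono := [ffun j => nat_of_bool (j == i)].

Definition qpoly_mul (f g : qpoly) : qpoly :=
  [seq (sf_mul a.1 b.1, mono_mul a.2 b.2) | a <- f, b <- g].
Definition qpoly_add (f g : qpoly) : qpoly := f ++ g.

(* elements of QP_sf(u): pairs (numerator, denominator), both nonempty *)
Definition qpsf := (qpoly * qpoly)%type.

Definition qp_eq (x y : qpsf) : Prop :=
  Permutation (qpoly_mul x.1 y.2) (qpoly_mul y.1 x.2).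

Definition qp_one : qpsf := ([:: (sf_one P, mono1)], [:: (sf_one P, mono1)]).
Definition qp_mul (x y : qpsf) : qpsf := (qpoly_mul x.1 y.1, qpoly_mul x.2 y.2).
Definition qp_inv (x : qpsf) : qpsf := (x.2, x.1).
Definition qp_add (x y : qpsf) : qpsf :=
  (qpoly_add (qpoly_mul x.1 y.2) (qpoly_mul y.1 x.2), qpoly_mul x.2 y.2).
Definition qp_const (p : P) : qpsf := ([:: (p, mono1)], [:: (sf_one P, mono1)]).
Definition qp_var (i : 'I_n) : qpsf :=
  ([:: (sf_one P, mono_var i)], [:: (sf_one P, mono1)]).

Definition QPsf_ops : sfops := @SFOps qpsf qp_add qp_mul qp_one qp_inv.

End QPsf.

Definition mut_yc (P : semifield) n (k : 'I_n)
  (s : ('I_n -> QPsf_ops P n) * ('I_n -> P) * 'M[int]_n)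
  : ('I_n -> QPsf_ops P n) * ('I_n -> P) * 'M[int]_n :=
  let: (y, p, B) := s in
  let y' := fun j : 'I_n =>
    if j == k then qp_inv (y k)
    else qp_mul (y j)
      (o_expz (S := QPsf_ops P n)
        (qp_add (qp_const n (o_brk (S := ops_of P) (p k) (B k j)))
                (qp_mul (qp_const n (o_brk (S := ops_of P) (p k) (- B k j)))
                        (o_expz (S := QPsf_ops P n) (y k) (- sgz (B k j)))))
        (- B k j)) in
  (y', mut_y (S := ops_of P) k B p, mut_mx k B).

Definition YCpattern (P : semifield) n (B0 : 'M[int]_n) (p0 : 'I_n -> P)
  (w : seq 'I_n) :=
  foldl (fun s k => mut_yc k s) ((fun i => qp_var P i), p0, B0) w.

Definition Ytil (P : semifield) n (B0 : 'M[int]_n) (p0 : 'I_n -> P)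
  (w : seq 'I_n) (i : 'I_n) : qpsf P n :=
  (YCpattern B0 p0 w).1.1 i.

From Pilot Require Import Defs.
From HB Require Import structures.
From mathcomp Require Import all_boot all_order all_algebra.
From mathcomp Require Import mpoly ring.
From Stdlib Require Import Setoid Morphisms Permutation.
Set Implicit Arguments. Unset Strict Implicit. Unset Printing Implicit Defensive.
Import Order.TTheory GRing.Theory Num.Theory.

(* Every term of the free semifield Q_sf(y) is equivalent to a ratio of two
   polynomials with positive integer coefficients, and two terms are equal
   exactly when the cross products of these ratios agree as multisets of
   monomials (soundness is checked in Z[y]).  By induction along the path to v,
   the pattern with coefficients is the plain pattern evaluated at the
   rescaled variables and normalised by its value at p:
     Ytil_{j;v}(u) = Y_{j;v}(p_1 u_1, ..., p_n u_n) / Y_{j;v}(p_1, ..., p_n),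
   with p_v = Y_v(p) and the same exchange matrices.  The rescaling
   u_i |-> p_i u_i is injective on monomials and the normalising factor is
   read off any single monomial, so Ytil_{i;v} = Ytil_{j;v'} iff
   Y_{i;v} = Y_{j;v'}. *)

Section FreeSemifield.
Variable n : nat.
Local Notation T := (sfterm n).
Local Notation "x ~ y" := (@sfeq n x y) (at level 70).

Lemma sfeq_Equivalence : Equivalence (@sfeq n).
Proof. split; [exact: sfeq_refl | exact: sfeq_sym | exact: sfeq_trans]. Qed.
Existing Instance sfeq_Equivalence.
#[local] Hint Resolve sfeq_refl : core.

Instance TAdd_Proper : Proper (@sfeq n ==> @sfeq n ==> @sfeq n) (@TAdd n).
Proof. by move=> ? ? ? ? ? ?; apply: sfeq_add. Qed.
Instance TMul_Proper : Proper (@sfeq n ==> @sfeq n ==> @sfeq n) (@TMul n).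
Proof. by move=> ? ? ? ? ? ?; apply: sfeq_mul. Qed.
Instance TInv_Proper : Proper (@sfeq n ==> @sfeq n) (@TInv n).
Proof. by move=> ? ? ?; apply: sfeq_inv. Qed.

Lemma sfeq_mul1l (x : T) : TMul TOne x ~ x.
Proof. by rewrite sfeq_mulC sfeq_mul1. Qed.

Lemma sfeq_mulCA (x y z : T) : TMul x (TMul y z) ~ TMul y (TMul x z).
Proof. by rewrite sfeq_mulA (sfeq_mulC x y) -sfeq_mulA. Qed.

Lemma sfeq_mulACA (x y z w : T) :
  TMul (TMul x y) (TMul z w) ~ TMul (TMul x z) (TMul y w).
Proof. by rewrite -!sfeq_mulA (sfeq_mulCA y z). Qed.

Lemma sfeq_mulVl (x : T) : TMul (TInv x) x ~ TOne.
Proof. by rewrite sfeq_mulC sfeq_mulV. Qed.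

Lemma sfeq_inv_uniq (x y : T) : TMul x y ~ TOne -> y ~ TInv x.
Proof.
move=> xy1; rewrite -(sfeq_mul1l y) -(sfeq_mulVl x) -sfeq_mulA xy1.
exact: sfeq_mul1.
Qed.

Lemma sfeq_inv1 : TInv (TOne : T) ~ TOne.
Proof. by symmetry; apply: sfeq_inv_uniq; apply: sfeq_mul1. Qed.

Lemma sfeq_invM (x y : T) : TInv (TMul x y) ~ TMul (TInv x) (TInv y).
Proof.
by symmetry; apply: sfeq_inv_uniq; rewrite sfeq_mulACA !sfeq_mulV sfeq_mul1.
Qed.

Lemma sfeq_invK (x : T) : TInv (TInv x) ~ x.
Proof. by symmetry; apply: sfeq_inv_uniq; apply: sfeq_mulVl. Qed.

Lemma sfeq_mulDr (x y z : T) : TMul x (TAdd y z) ~ TAdd (TMul x y) (TMul x z).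
Proof. by rewrite sfeq_mulC sfeq_mulDl (sfeq_mulC y) (sfeq_mulC z). Qed.

Lemma sfeq_mulIr (x y c : T) : TMul x c ~ TMul y c -> x ~ y.
Proof.
move=> xcyc; rewrite -(sfeq_mul1 x) -(sfeq_mul1 y) -(sfeq_mulV c) !sfeq_mulA.
by rewrite xcyc.
Qed.

Definition tfrac (x y : T) : T := TMul x (TInv y).

Instance tfrac_Proper : Proper (@sfeq n ==> @sfeq n ==> @sfeq n) tfrac.
Proof. by move=> ? ? xx' ? ? yy'; rewrite /tfrac xx' yy'. Qed.

Lemma tfrac_add (a b c d : T) :
  TAdd (tfrac a b) (tfrac c d) ~ tfrac (TAdd (TMul a d) (TMul c b)) (TMul b d).
Proof.
rewrite /tfrac sfeq_mulDl sfeq_invM (sfeq_mulACA a d) sfeq_mulV sfeq_mul1.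
by rewrite (sfeq_mulC (TInv b)) (sfeq_mulACA c b) sfeq_mulV sfeq_mul1.
Qed.

Lemma tfrac_mul (a b c d : T) :
  TMul (tfrac a b) (tfrac c d) ~ tfrac (TMul a c) (TMul b d).
Proof. by rewrite /tfrac sfeq_invM sfeq_mulACA. Qed.

Lemma tfrac_inv (a b : T) : TInv (tfrac a b) ~ tfrac b a.
Proof. by rewrite /tfrac sfeq_invM sfeq_invK sfeq_mulC. Qed.

Lemma tfrac_mulK (a b d : T) : TMul (tfrac a b) (TMul b d) ~ TMul a d.
Proof.
by rewrite /tfrac -sfeq_mulA (sfeq_mulA (TInv b)) sfeq_mulVl sfeq_mul1l.
Qed.

Lemma tfrac_eq (a b c d : T) : TMul a d ~ TMul c b -> tfrac a b ~ tfrac c d.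
Proof.
move=> cross; apply: (@sfeq_mulIr _ _ (TMul b d)).
by rewrite tfrac_mulK (sfeq_mulC b d) tfrac_mulK.
Qed.

Definition tpow (x : T) k := iter k (TMul x) TOne.

Lemma tpowD x k l : tpow x (k + l) ~ TMul (tpow x k) (tpow x l).
Proof.
elim: k => [|k IHk] /=; first by rewrite sfeq_mul1l.
by rewrite /tpow /= -/(tpow x _) IHk sfeq_mulA.
Qed.

Definition tmono_seq (m : mono n) (s : seq 'I_n) : T :=
  foldr (fun i acc => TMul (tpow (TVar i) (m i)) acc) TOne s.

Definition tmono (m : mono n) : T := tmono_seq m (enum 'I_n).

Lemma tmono_mul a b : tmono (mono_mul a b) ~ TMul (tmono a) (tmono b).
Proof.
rewrite /tmono; elim: (enum 'I_n) => [|i s IHs] /=; first by rewrite sfeq_mul1.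
by rewrite IHs ffunE tpowD sfeq_mulACA.
Qed.

Lemma tmono1 : tmono (mono1 n) ~ TOne.
Proof.
rewrite /tmono; elim: (enum 'I_n) => [|i s IHs] //=.
by rewrite IHs ffunE sfeq_mul1l.
Qed.

Lemma tmono_seq_var i s : uniq s ->
  tmono_seq (mono_var i) s ~ (if i \in s then TVar i else TOne).
Proof.
elim: s => [|k s IHs] //= /andP[kNs s_uniq].
rewrite ffunE IHs // inE; have [ki|ki] := eqVneq k i.
- by rewrite -ki (negbTE kNs) /tpow /= !sfeq_mul1.
- by rewrite /tpow /= sfeq_mul1l.
Qed.

Lemma tmono_var i : tmono (mono_var i) ~ TVar i.
Proof. by rewrite /tmono tmono_seq_var ?enum_uniq // mem_enum. Qed.

(* The value at [[::]] is a junk value: only nonempty lists are summed. *)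
Fixpoint tsum (s : seq (mono n)) : T :=
  match s with
  | [::] => TOne
  | m :: s' => if s' is [::] then tmono m else TAdd (tmono m) (tsum s')
  end.

Lemma tsum_cons m s : s != [::] -> tsum (m :: s) = TAdd (tmono m) (tsum s).
Proof. by case: s. Qed.

Lemma tsum_perm s t : Permutation s t -> tsum s ~ tsum t.
Proof.
elim=> [|x l l' ll' IH|x y l|l l' l'' _ IH1 _ IH2] //.
- case: l ll' IH => [|a l] ll' IH; first by rewrite (Permutation_nil ll').
  case: l' ll' IH => [|b l'] ll' IH; first by move/Permutation_length: ll'.
  by rewrite (@tsum_cons x) // (@tsum_cons x) // IH.
- case: l => [|a l]; first by rewrite /= sfeq_addC.
  rewrite (@tsum_cons y) // (@tsum_cons x) // (@tsum_cons x) // (@tsum_cons y) //.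
  by rewrite sfeq_addA (sfeq_addC (tmono y)) -sfeq_addA.
- by rewrite IH1.
Qed.

Lemma tsum_cat s t : s != [::] -> t != [::] ->
  tsum (s ++ t) ~ TAdd (tsum s) (tsum t).
Proof.
elim: s => [|a s IHs] // _ t_neq0.
case: s IHs => [|b s] IHs; first by rewrite cat1s tsum_cons.
by rewrite cat_cons (@tsum_cons a) // IHs // (@tsum_cons a) // sfeq_addA.
Qed.

Definition npoly_mul (f g : seq (mono n)) := [seq mono_mul a b | a <- f, b <- g].

Lemma npoly_mul_neq0 f g : f != [::] -> g != [::] -> npoly_mul f g != [::].
Proof. by rewrite -!size_eq0 size_allpairs muln_eq0 => /negbTE-> /negbTE->. Qed.

Lemma npoly_mul1l (f : seq (mono n)) : npoly_mul [:: mono1 n] f = f.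
Proof.
rewrite /npoly_mul /= cats0 -[RHS]map_id; apply: eq_map => a.
by apply/ffunP => i; rewrite !ffunE add0n.
Qed.

Lemma tsum_map_mul a g : g != [::] ->
  tsum [seq mono_mul a b | b <- g] ~ TMul (tmono a) (tsum g).
Proof.
elim: g => [|b g IHg] // _.
case: g IHg => [|c g] IHg; first by rewrite /= tmono_mul.
rewrite map_cons (@tsum_cons (mono_mul a b)) // IHg // (@tsum_cons b) //.
by rewrite sfeq_mulDr tmono_mul.
Qed.

Lemma tsum_mul f g : f != [::] -> g != [::] ->
  tsum (npoly_mul f g) ~ TMul (tsum f) (tsum g).
Proof.
move=> + g_neq0; elim: f => [|a f IHf] // _; rewrite /npoly_mul /=.
case: f IHf => [|b f] IHf; first by rewrite cats0 tsum_map_mul.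
rewrite tsum_cat -/(npoly_mul _ _) ?npoly_mul_neq0 //; last first.
  by rewrite -size_eq0 size_map size_eq0.
by rewrite tsum_map_mul // IHf // sfeq_mulDl.
Qed.

Definition nfrac := (seq (mono n) * seq (mono n))%type.
Definition nfrac_add (x y : nfrac) : nfrac :=
  (npoly_mul x.1 y.2 ++ npoly_mul y.1 x.2, npoly_mul x.2 y.2).
Definition nfrac_mul (x y : nfrac) : nfrac :=
  (npoly_mul x.1 y.1, npoly_mul x.2 y.2).
Definition nfrac1 : nfrac := ([:: mono1 n], [:: mono1 n]).
Definition nfrac_inv (x : nfrac) : nfrac := (x.2, x.1).
Definition nfrac_ops : sfops := @SFOps nfrac nfrac_add nfrac_mul nfrac1 nfrac_inv.

Lemma nfrac_mul1l (x : nfrac) : nfrac_mul nfrac1 x = x.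
Proof. by case: x => a b; rewrite /nfrac_mul /= !npoly_mul1l. Qed.

Fixpoint nfrac_of (t : T) : nfrac :=
  match t with
  | TVar i => ([:: mono_var i], [:: mono1 n])
  | TOne => nfrac1
  | TAdd a b => nfrac_add (nfrac_of a) (nfrac_of b)
  | TMul a b => nfrac_mul (nfrac_of a) (nfrac_of b)
  | TInv a => nfrac_inv (nfrac_of a)
  end.

Lemma nfrac_of_neq0 t : (nfrac_of t).1 != [::] /\ (nfrac_of t).2 != [::].
Proof.
elim: t => [i||a [a1 a2] b [b1 b2]|a [a1 a2] b [b1 b2]|a [a1 a2]] //=;
  rewrite ?npoly_mul_neq0 //.
by rewrite -size_eq0 size_cat addn_eq0 negb_and size_eq0 npoly_mul_neq0.
Qed.

Definition term_of_nfrac (x : nfrac) : T := tfrac (tsum x.1) (tsum x.2).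

Lemma nfrac_ofK t : t ~ term_of_nfrac (nfrac_of t).
Proof.
elim: t => [i||a IHa b IHb|a IHa b IHb|a IHa] /=.
- by rewrite /term_of_nfrac /tfrac /= tmono_var tmono1 sfeq_inv1 sfeq_mul1.
- by rewrite /term_of_nfrac /tfrac /= tmono1 sfeq_inv1 sfeq_mul1.
- have [a1 a2] := nfrac_of_neq0 a; have [b1 b2] := nfrac_of_neq0 b.
  rewrite {1}IHa {1}IHb /term_of_nfrac tfrac_add /=.
  by rewrite tsum_cat ?npoly_mul_neq0 // !tsum_mul.
- have [a1 a2] := nfrac_of_neq0 a; have [b1 b2] := nfrac_of_neq0 b.
  by rewrite {1}IHa {1}IHb /term_of_nfrac tfrac_mul /= !tsum_mul.
- by rewrite {1}IHa /term_of_nfrac tfrac_inv.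
Qed.

Lemma sfeq_of_cross_perm t u :
  Permutation (npoly_mul (nfrac_of t).1 (nfrac_of u).2)
              (npoly_mul (nfrac_of u).1 (nfrac_of t).2) ->
  t ~ u.
Proof.
move=> cross; rewrite (nfrac_ofK t) (nfrac_ofK u); apply: tfrac_eq.
have [t1 t2] := nfrac_of_neq0 t; have [u1 u2] := nfrac_of_neq0 u.
by rewrite -!tsum_mul // (tsum_perm cross).
Qed.

End FreeSemifield.

Section Soundness.
Local Open Scope ring_scope.
Variable n : nat.
Local Notation T := (sfterm n).

Definition mnm_of_mono (m : mono n) : 'X_{1..n} := [multinom m i | i < n].

Lemma mnm_of_mono_mul a b :
  mnm_of_mono (mono_mul a b) = (mnm_of_mono a + mnm_of_mono b)%MM.
Proof. by apply/mnmP => i; rewrite mnmDE !mnmE ffunE. Qed.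

Lemma mnm_of_mono_inj : injective mnm_of_mono.
Proof. by move=> a b /mnmP ab; apply/ffunP => i; have := ab i; rewrite !mnmE. Qed.

Lemma mnm_of_mono1 : mnm_of_mono (mono1 n) = 0%MM.
Proof. by apply/mnmP => i; rewrite mnmE mnm0E ffunE. Qed.

Definition mpoly_of_npoly (s : seq (mono n)) : {mpoly int[n]} :=
  \sum_(m <- s) 'X_[mnm_of_mono m].

Lemma mpoly_of_npoly_cat s t :
  mpoly_of_npoly (s ++ t) = mpoly_of_npoly s + mpoly_of_npoly t.
Proof. by rewrite /mpoly_of_npoly big_cat. Qed.

Lemma mpoly_of_npoly_mul f g :
  mpoly_of_npoly (npoly_mul f g) = mpoly_of_npoly f * mpoly_of_npoly g.
Proof.
rewrite /mpoly_of_npoly /npoly_mul big_allpairs_dep mulr_suml.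
apply: eq_bigr => a _; rewrite mulr_sumr; apply: eq_bigr => b _.
by rewrite mnm_of_mono_mul mpolyXD.
Qed.

Lemma mpoly_of_npoly1 : mpoly_of_npoly [:: mono1 n] = 1.
Proof. by rewrite /mpoly_of_npoly big_seq1 mnm_of_mono1 mpolyX0. Qed.

Lemma mcoeff_mpoly_of_npoly m s :
  (mpoly_of_npoly s)@_(mnm_of_mono m) = (count_mem m s)%:R.
Proof.
rewrite /mpoly_of_npoly; elim: s => [|a s IHs]; first by rewrite big_nil mcoeff0.
rewrite big_cons mcoeffD IHs mcoeffX /= natrD (inj_eq mnm_of_mono_inj) eq_sym.
by case: (m == a).
Qed.

Lemma mpoly_of_npoly_perm s t : mpoly_of_npoly s = mpoly_of_npoly t -> perm_eq s t.
Proof.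
move=> st; apply/allP => m _ /=; apply/eqP/eqP.
by rewrite -(eqr_nat int) -!mcoeff_mpoly_of_npoly st.
Qed.

Lemma mpoly_of_npoly_neq0 s : s != [::] -> mpoly_of_npoly s != 0.
Proof.
case: s => [|a s] // _; apply/eqP => /(congr1 (mcoeff (mnm_of_mono a))).
by rewrite mcoeff_mpoly_of_npoly mcoeff0 /= eqxx => /eqP; rewrite pnatr_eq0.
Qed.

Lemma sfeq_mpoly_cross t u : sfeq t u ->
  mpoly_of_npoly (nfrac_of t).1 * mpoly_of_npoly (nfrac_of u).2 =
  mpoly_of_npoly (nfrac_of u).1 * mpoly_of_npoly (nfrac_of t).2.
Proof.
elim=> {t u} /=; rewrite /nfrac_add /nfrac_mul /nfrac1 /nfrac_inv /=.
- by [].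
- by move=> t u _ ->.
- move=> t u v _ tu _ uv; have [_ u2] := nfrac_of_neq0 u.
  apply: (mulIf (mpoly_of_npoly_neq0 u2)).
  by rewrite mulrAC tu mulrAC uv; ring.
- move=> t t' u u' _ tt' _ uu'; rewrite !(mpoly_of_npoly_cat, mpoly_of_npoly_mul).
  by ring: tt' uu'.
- by move=> t t' u u' _ tt' _ uu'; rewrite !mpoly_of_npoly_mul; ring: tt' uu'.
- by move=> t t' _ tt'; ring: tt'.
all: by move=> *; rewrite !(mpoly_of_npoly_cat, mpoly_of_npoly_mul, mpoly_of_npoly1);
  ring.
Qed.

Lemma perm_eq_Permutation (A : eqType) (s t : seq A) :
  perm_eq s t -> Permutation s t.
Proof.
elim: s t => [|x s IHs] t st; first by move: st; rewrite perm_sym => /perm_nilP ->.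
have xt : x \in t by rewrite -(perm_mem st) mem_head.
case/splitPr: xt st => t1 t2 st.
have /IHs s_t1t2 : perm_eq s (t1 ++ t2).
  by rewrite -(perm_cons x) (seq.perm_trans st) // (perm_catCA t1 [:: x] t2).
exact: Permutation_cons_app s_t1t2.
Qed.

Lemma sfeq_cross_perm (t u : T) : sfeq t u ->
  Permutation (npoly_mul (nfrac_of t).1 (nfrac_of u).2)
              (npoly_mul (nfrac_of u).1 (nfrac_of t).2).
Proof.
move/sfeq_mpoly_cross; rewrite -!mpoly_of_npoly_mul.
by move/mpoly_of_npoly_perm/perm_eq_Permutation.
Qed.

End Soundness.

Section SemifieldFacts.
Variable P : semifield.
Local Notation "x *' y" := (@sf_mul P x y) (at level 40, left associativity).
Local Notation "x +' y" := (@sf_add P x y) (at level 50, left associativity).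
Local Notation one := (@sf_one P).
Local Notation inv := (@sf_inv P).

Lemma sf_mul1l (x : P) : one *' x = x.
Proof. by rewrite sf_mulC sf_mul1. Qed.

Lemma sf_mulCA (x y z : P) : x *' (y *' z) = y *' (x *' z).
Proof. by rewrite sf_mulA (sf_mulC x y) -sf_mulA. Qed.

Lemma sf_mulAC (x y z : P) : x *' y *' z = x *' z *' y.
Proof. by rewrite -sf_mulA (sf_mulC y) sf_mulA. Qed.

Lemma sf_mulACA (x y z w : P) : (x *' y) *' (z *' w) = (x *' z) *' (y *' w).
Proof. by rewrite -!sf_mulA (sf_mulCA y z). Qed.

Lemma sf_mulVl (x : P) : inv x *' x = one.
Proof. by rewrite sf_mulC sf_mulV. Qed.

Lemma sf_inv_uniq (x y : P) : x *' y = one -> y = inv x.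
Proof. by move=> xy1; rewrite -(sf_mul1l y) -(sf_mulVl x) -sf_mulA xy1 sf_mul1. Qed.

Lemma sf_inv1 : inv one = one.
Proof. by symmetry; apply: sf_inv_uniq; rewrite sf_mul1. Qed.

Lemma sf_invM (x y : P) : inv (x *' y) = inv x *' inv y.
Proof. by symmetry; apply: sf_inv_uniq; rewrite sf_mulACA !sf_mulV sf_mul1. Qed.

Lemma sf_invK (x : P) : inv (inv x) = x.
Proof. by symmetry; apply: sf_inv_uniq; rewrite sf_mulVl. Qed.

Lemma sf_mulK (x c : P) : x *' c *' inv c = x.
Proof. by rewrite -sf_mulA sf_mulV sf_mul1. Qed.

Lemma sf_mulIr (x y c : P) : x *' c = y *' c -> x = y.
Proof. by move=> xcyc; rewrite -(sf_mulK x c) xcyc sf_mulK. Qed.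

Local Open Scope ring_scope.
Local Notation brk := (@o_brk (ops_of P)).
Local Notation expz := (@o_expz (ops_of P)).

(* With [q = Y_k(p)], both summands of the mutation factor with coefficients
   acquire the normalisation [1 / q^[[b]]], and raised to [-b] it becomes the
   plain mutation factor evaluated at [p]. *)
Lemma inv_brkN_mul_expz (q : P) (b : int) :
  inv (brk q (- b)) *' expz q (- sgz b) = inv (brk q b).
Proof.
rewrite /o_brk /o_plus /o_minus /=; case: (ltrgtP b 0) => hb.
- rewrite oppr_lt0 (ltNge 0 b) (le_eqVlt b 0) hb orbT /= oppr_eq0 (lt_eqF hb).
  by rewrite (ltr0_sgz hb) /= sf_invM sf_invK sf_mul1 sf_mulAC sf_mulVl sf_mul1l.
- rewrite oppr_lt0 hb /= (gtr0_sgz hb) /=.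
  by rewrite sf_invK sf_mul1 sf_invM sf_invK sf_mulC.
- by rewrite hb /= sf_inv1 sf_mul1.
Qed.

Lemma expz_inv_brk (q : P) (b : int) :
  expz (inv (brk q b)) (- b) = expz (one +' expz q (- sgz b)) (- b).
Proof.
rewrite /o_brk /o_plus /o_minus /=; case: (ltrgtP b 0) => hb.
- by rewrite (ltr0_sgz hb) /= sf_invK sf_mul1 sf_addC.
- rewrite (gtr0_sgz hb) /= sf_mul1 sf_invM sf_invK sf_mulC sf_mulDl sf_mulV.
  by rewrite sf_mul1l.
- by rewrite hb.
Qed.

End SemifieldFacts.

Section Evaluation.
Variables (P : semifield) (n : nat).

Fixpoint sf_eval (rho : 'I_n -> P) (t : sfterm n) : P :=
  match t with
  | TVar i => rho i
  | TOne => sf_one P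
  | TAdd a b => sf_add (sf_eval rho a) (sf_eval rho b)
  | TMul a b => sf_mul (sf_eval rho a) (sf_eval rho b)
  | TInv a => sf_inv (sf_eval rho a)
  end.

Lemma sf_eval_sfeq rho t u : sfeq t u -> sf_eval rho t = sf_eval rho u.
Proof.
elim=> {t u} /=; intros; try congruence;
  first [exact: sf_mulA | exact: sf_mulC | exact: sf_mul1 | exact: sf_mulV
        | exact: sf_addA | exact: sf_addC | exact: sf_mulDl].
Qed.

Variable rho : 'I_n -> P.

Definition sf_eval_mono (m : mono n) : P := sf_eval rho (tmono m).

Lemma sf_eval_mono_mul a b :
  sf_eval_mono (mono_mul a b) = sf_mul (sf_eval_mono a) (sf_eval_mono b).
Proof. exact: sf_eval_sfeq (tmono_mul a b). Qed.

Lemma sf_eval_mono1 : sf_eval_mono (mono1 n) = sf_one P.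
Proof. exact: sf_eval_sfeq (tmono1 n). Qed.

Lemma sf_eval_mono_var i : sf_eval_mono (mono_var i) = rho i.
Proof. exact: sf_eval_sfeq (tmono_var i). Qed.

End Evaluation.

Section MorphMutation.
Variables (n : nat) (S : sfops) (h : sfterm n -> S).
Hypothesis hA : forall a b, h (TAdd a b) = o_add (h a) (h b).
Hypothesis hM : forall a b, h (TMul a b) = o_mul (h a) (h b).
Hypothesis h1 : h TOne = o_one S.
Hypothesis hI : forall a, h (TInv a) = o_inv (h a).

Lemma morph_iter_mul x k :
  h (iter k (TMul x) TOne) = iter k (o_mul (h x)) (o_one S).
Proof. by elim: k => [|k IHk] //=; rewrite hM IHk. Qed.

Lemma morph_expz x z : h (o_expz (S := Qsf_ops n) x z) = o_expz (h x) z.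
Proof. by case: z => k /=; rewrite ?hI ?hM morph_iter_mul. Qed.

Lemma morph_mut_y k B (y : 'I_n -> sfterm n) j :
  h (mut_y (S := Qsf_ops n) k B y j) = mut_y (S := S) k B (fun i => h (y i)) j.
Proof.
rewrite /mut_y; case: (j == k); first exact: hI.
by rewrite hM morph_expz hA h1 morph_expz.
Qed.

End MorphMutation.

Lemma eq_mut_y (S : sfops) n k B (y y' : 'I_n -> S) :
  y =1 y' -> mut_y k B y =1 mut_y k B y'.
Proof. by move=> yy' j; rewrite /mut_y !yy'. Qed.

Lemma seq_map_ListDef (A B : Type) (f : A -> B) (s : seq A) :
  map f s = ListDef.map f s.
Proof. by elim: s => //= a s ->. Qed.

Lemma Permutation_map_seq (A B : Type) (f : A -> B) (s t : seq A) :
  Permutation s t -> Permutation (map f s) (map f t).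
Proof. by rewrite !seq_map_ListDef; apply: Permutation_map. Qed.

Lemma Permutation_map_seq_inj (A B : Type) (f : A -> B) (s t : seq A) :
  injective f -> Permutation (map f s) (map f t) -> Permutation s t.
Proof.
move=> f_inj; rewrite (seq_map_ListDef f t) => /Permutation_map_inv[s' [fs' s't]].
rewrite -seq_map_ListDef in fs'; rewrite (inj_map f_inj fs').
exact: Permutation_sym.
Qed.

Section Twist.
Variables (P : semifield) (n : nat) (p0 : 'I_n -> P).
Local Notation "x *' y" := (@sf_mul P x y) (at level 40, left associativity).
Local Notation one := (@sf_one P).
Local Notation inv := (@sf_inv P).
Local Notation mono_at := (sf_eval_mono p0).

(* [c * f(p_1 u_1, ..., p_n u_n)] for a polynomial [f] with coefficients 1. *)
Definition qp_twist (c : P) (f : seq (mono n)) : Defs.qpoly P n :=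
  [seq (c *' mono_at m, m) | m <- f].

Lemma qpoly_mul_twist c d f g :
  Defs.qpoly_mul (qp_twist c f) (qp_twist d g) = qp_twist (c *' d) (npoly_mul f g).
Proof.
rewrite /Defs.qpoly_mul /qp_twist /npoly_mul allpairs_mapl allpairs_mapr map_allpairs.
by apply: eq_allpairs => a b /=; rewrite sf_eval_mono_mul sf_mulACA.
Qed.

(* [x] is the fraction [X] at the rescaled variables, divided by [r]. *)
Definition qp_twisted (x : qpsf P n) (X : nfrac n) (r : P) :=
  exists c, x = (qp_twist c X.1, qp_twist (c *' r) X.2).

Lemma qp_twisted_mul x X r y Y s : qp_twisted x X r -> qp_twisted y Y s ->
  qp_twisted (qp_mul x y) (nfrac_mul X Y) (r *' s).
Proof.
by move=> [c ->] [d ->]; exists (c *' d); rewrite /qp_mul /= !qpoly_mul_twist sf_mulACA.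
Qed.

Lemma qp_twisted_inv x X r : qp_twisted x X r -> qp_twisted (qp_inv x) (nfrac_inv X) (inv r).
Proof. by move=> [c ->]; exists (c *' r); rewrite /qp_inv /= sf_mulK. Qed.

Lemma qp_twisted1 : qp_twisted (qp_one P n) (nfrac1 n) one.
Proof. by exists one; rewrite /qp_one /qp_twist /= sf_eval_mono1 !sf_mul1. Qed.

Lemma qp_twisted_const a : qp_twisted (qp_const n a) (nfrac1 n) (inv a).
Proof.
by exists a; rewrite /qp_const /qp_twist /= sf_eval_mono1 !sf_mul1 sf_mulV.
Qed.

Lemma qp_twisted_add x X y Y r : qp_twisted x X r -> qp_twisted y Y r ->
  qp_twisted (qp_add x y) (nfrac_add X Y) r.
Proof.
move=> [c ->] [d ->]; exists (c *' (d *' r)).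
rewrite /qp_add /Defs.qpoly_add /= !qpoly_mul_twist (sf_mulCA d c) /qp_twist map_cat.
by rewrite sf_mulAC sf_mulA.
Qed.

Lemma qp_twisted_expz x X r z : qp_twisted x X r ->
  qp_twisted (o_expz (S := QPsf_ops P n) x z) (o_expz (S := nfrac_ops n) X z)
             (o_expz (S := ops_of P) r z).
Proof.
move=> xXr; have twisted_iter k : qp_twisted (iter k (qp_mul x) (qp_one P n))
    (iter k (nfrac_mul X) (nfrac1 n)) (iter k (sf_mul r) one).
  by elim: k => [|k IHk] /=; [exact: qp_twisted1 | exact: qp_twisted_mul].
by case: z => k /=; [exact: twisted_iter | exact: qp_twisted_inv (twisted_iter k.+1)].
Qed.

Lemma qp_twist_perm_scale c d f g : f != [::] ->
  Permutation (qp_twist c f) (qp_twist d g) -> c = d.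
Proof.
case: f => [|m f] // _ cf_dg; have := Permutation_in _ cf_dg (or_introl erefl).
rewrite /qp_twist seq_map_ListDef => /List.in_map_iff [m' [[dm'_cm m'm] _]].
by rewrite m'm in dm'_cm; apply: sf_mulIr (esym dm'_cm).
Qed.

End Twist.

Section Patterns.
Variables (P : semifield) (n : nat) (p0 : 'I_n -> P).
Local Open Scope ring_scope.
Local Notation brk := (@o_brk (ops_of P)).
Local Notation Yat := (sf_eval p0).

Definition twisted_seed (sc : ('I_n -> QPsf_ops P n) * ('I_n -> P) * 'M[int]_n)
    (st : ('I_n -> Qsf_ops n) * 'M[int]_n) :=
  [/\ sc.2 = st.2, (forall j, sc.1.2 j = Yat (st.1 j)) &
      (forall j, qp_twisted p0 (sc.1.1 j) (nfrac_of (st.1 j)) (Yat (st.1 j)))].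

Lemma twisted_seed_mut k sc st : twisted_seed sc st ->
  twisted_seed (mut_yc k sc) (mut_y k st.2 st.1, mut_mx k st.2).
Proof.
case: sc st => [[y p] B] [t B']; rewrite /twisted_seed /= => -[<- p_Yat y_tw].
split=> // j; rewrite (@morph_mut_y _ (ops_of P) Yat) //.
  exact: (@eq_mut_y (ops_of P) n k B p _ p_Yat).
rewrite (@morph_mut_y _ (nfrac_ops n) (@nfrac_of n)) // /mut_y.
case: (j == k); first exact: qp_twisted_inv (y_tw k).
rewrite p_Yat; set q := Yat (t k); set b := B k j.
have tw_Yk := qp_twisted_expz (- sgz b) (y_tw k).
have := qp_twisted_mul (qp_twisted_const p0 (brk q (- b))) tw_Yk.
rewrite nfrac_mul1l inv_brkN_mul_expz => tw_summand.
have := qp_twisted_expz (- b) (qp_twisted_add (qp_twisted_const p0 (brk q b)) tw_summand).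
by rewrite expz_inv_brk; apply: qp_twisted_mul (y_tw j).
Qed.

Lemma twisted_seed_pattern B0 w : twisted_seed (YCpattern B0 p0 w) (Ypattern B0 w).
Proof.
rewrite /YCpattern /Ypattern.
have: twisted_seed ((fun i => qp_var P i), p0, B0) ((fun i => TVar i : Qsf_ops n), B0).
  split=> //= j; exists (sf_inv (p0 j)).
  by rewrite /qp_var /qp_twist /= sf_eval_mono_var sf_eval_mono1 sf_mul1 sf_mulVl.
elim: w ((fun i => qp_var P i), p0, B0) ((fun i => TVar i : Qsf_ops n), B0) => //=.
by move=> k w IHw sc st tw; apply/IHw/twisted_seed_mut.
Qed.

Lemma qp_eq_twisted t u x y :
  qp_twisted p0 x (nfrac_of t) (Yat t) -> qp_twisted p0 y (nfrac_of u) (Yat u) ->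
  sfeq t u <-> qp_eq x y.
Proof.
move=> [c ->] [d ->]; rewrite /qp_eq /= !qpoly_mul_twist; split=> [tu|].
- rewrite -(sf_eval_sfeq p0 tu) sf_mulCA.
  exact/Permutation_map_seq/sfeq_cross_perm.
- have [t1 t2] := nfrac_of_neq0 t; have [u1 u2] := nfrac_of_neq0 u.
  move=> cross; have cd := qp_twist_perm_scale (npoly_mul_neq0 t1 u2) cross.
  rewrite -cd in cross.
  apply/sfeq_of_cross_perm/(Permutation_map_seq_inj _ cross).
  by move=> a b [].
Qed.

End Patterns.

Theorem mainTheorem3 (P : semifield) (n : nat) (B0 : 'M[int]_n)
  (hB0 : skew_symmetrizable B0) (p0 : 'I_n -> P)
  (v v' : seq 'I_n) (hv : reduced v) (hv' : reduced v') (i j : 'I_n) :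
  sfeq (Y B0 v i) (Y B0 v' j) <-> qp_eq (Ytil B0 p0 v i) (Ytil B0 p0 v' j).
Proof.
have [_ _ tw_v] := twisted_seed_pattern p0 B0 v.
have [_ _ tw_v'] := twisted_seed_pattern p0 B0 v'.
exact: qp_eq_twisted (tw_v i) (tw_v' j).
Qed.
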